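(* Let $V$ be a vertex algebra over a field $\mathbb{F}$ of characteristic $p$, and let $(W,Y_W)$ be a $V$-module. Write $Y_W(a,x)=\sum_{n\in\mathbb{Z}}a_nx^{-n-1}$. Let $a\in V$ be such that on $W$ the operators $a_n$ ($n\in\mathbb{N}$) mutually commute and the operators $a_{-n}$ ($n\in\mathbb{Z}_+$) mutually commute. Then for every $n\in\mathbb{Z}_+$, $$Y_W\big((a_{-n})^p\mathbf 1,x\big)=\sum_{j\ge0}\binom{n+j-1}{j}a_{-n-j}^p\,x^{jp}+\sum_{j\ge0}(-1)^{1-n}\binom{n+j-1}{j}a_j^p\,x^{-p(n+j)}.$$ Here $(a_{-n})^p\mathbf 1\in V$ is computed with the vertex operators of $V$, and the right-hand side uses the operators on $W$. In particular, $$Y_W\big((a_{-1})^p\mathbf 1,x\big)=\sum_{j\in\mathbb{Z}}a_j^p\,x^{-p(j+1)}.$$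
   Context: Let $p$ be a prime and $\mathbb{F}$ a field of characteristic $p$. Integers, and binomial coefficients $\binom{n}{k}=\frac{n(n-1)\cdots(n-k+1)}{k!}$ for $n\in\mathbb{Z}$, $k\in\mathbb{N}$, are viewed as elements of the prime subfield of $\mathbb{F}$. We write $\mathbb{Z}_+$ for the positive integers. <b>Formal calculus.</b> For every $n\in\mathbb{Z}$ set $(x+y)^n=\sum_{k\ge0}\binom{n}{k}x^{n-k}y^k$, and let $\delta(x)=\sum_{n\in\mathbb{Z}}x^n$. <b>Vertex algebras.</b> A vertex algebra over $\mathbb{F}$ is a vector space $V$ with a vector $\mathbf 1$ and a linear map $$Y(\cdot,x):V\to(\mathrm{End}\,V)[[x,x^{-1}]],\qquad v\mapsto Y(v,x)=\sum_{n\in\mathbb{Z}}v_nx^{-n-1},$$ satisfying the following conditions for all $u,v\in V$: <ul> <li>$u_nv=0$ for $n\gg0$;</li> <li>$Y(\mathbf 1,x)=\mathrm{id}_V$;</li> <li>$Y(v,x)\mathbf 1\in V[[x]]$ and its constant term is $v$;</li> <li>the Jacobi identity $$x_0^{-1}\delta\!\left(\tfrac{x_1-x_2}{x_0}\right)Y(u,x_1)Y(v,x_2)-x_0^{-1}\delta\!\left(\tfrac{x_2-x_1}{-x_0}\right)Y(v,x_2)Y(u,x_1)=x_2^{-1}\delta\!\left(\tfrac{x_1-x_0}{x_2}\right)Y(Y(u,x_0)v,x_2).$$</li> </ul> A $V$-module is a vector space $W$ with a linear map $Y_W(\cdot,x):V\to(\mathrm{End}\,W)[[x,x^{-1}]]$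 satisfying truncation ($u_nw=0$ for $n\gg0$), $Y_W(\mathbf 1,x)=\mathrm{id}_W$, and the same Jacobi identity with $Y_W$ in place of $Y$ in the three products of vertex operators. *)

From HB Require Import structures.
From mathcomp Require Import all_boot all_order all_algebra.
Set Implicit Arguments. Unset Strict Implicit. Unset Printing Implicit Defensive.
Import Order.TTheory GRing.Theory Num.Theory.
Local Open Scope ring_scope.

(* Generalized binomial coefficient binom(n,k) = n(n-1)...(n-k+1)/k! for
   n : int, k : nat, as an integer:
     binom(m,k) = 'C(m,k) for m >= 0,
     binom(-(m+1),k) = (-1)^k 'C(m+k,k). *)
Definition binz (n : int) (k : nat) : int :=
  match n with
  | Posz m => ('C(m, k))%:Z
  | Negz m => (-1) ^+ k * ('C(m + k, k))%:Z
  end.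

(* Borcherds identity = the coefficient of x0^{-l-1} x1^{-m-1} x2^{-n-1} in
   the Jacobi identity (with the expansion conventions (x+y)^n = sum binom(n,k)
   x^{n-k} y^k).  Here Y gives the vertex operators of V (used for Y(u,x0)v)
   and YW the ones acting on the space W (W = V for the algebra itself).
   The infinite sums over i are finite by truncation; we state the identity
   for every cut-off N beyond which all summands vanish. *)
Definition borcherds (F : fieldType) (V W : lmodType F)
    (Y : V -> int -> V -> V) (YW : V -> int -> W -> W) : Prop :=
  forall (u v : V) (w : W) (l m n : int) (N : nat),
    (forall i : nat, (N <= i)%N ->
       [/\ Y u (l + i%:Z) v = 0, YW v (n + i%:Z) w = 0 & YW u (m + i%:Z) w = 0]) ->
    \sum_(i < N) (binz m i)%:~R *: YW (Y u (l + i%:Z) v) (m + n - i%:Z) w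
    = \sum_(i < N) ((-1) ^+ i * (binz l i)%:~R) *:
        (YW u (l + m - i%:Z) (YW v (n + i%:Z) w)
         - (-1) ^+ `|l|%N *: YW v (l + n - i%:Z) (YW u (m + i%:Z) w)).

(* A vertex algebra structure on the F-vector space V:
   vop u n v = u_n v, i.e. Y(u,x) = sum_n u_n x^{-n-1}. *)
Record vertex_algebra (F : fieldType) (V : lmodType F) := VertexAlgebra {
  vac : V;
  vop : V -> int -> V -> V;
  vop_linl : forall (c : F) (u u' : V) (n : int) (v : V),
      vop (c *: u + u') n v = c *: vop u n v + vop u' n v;
  vop_linr : forall (c : F) (u : V) (n : int) (v v' : V),
      vop u n (c *: v + v') = c *: vop u n v + vop u n v';
  vop_trunc : forall u v : V, exists N : int, forall n : int, N <= n -> vop u n v = 0;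
  vop_vac : forall (n : int) (v : V), vop vac n v = if n == -1 then v else 0;
  vop_creation : forall (v : V) (n : int), 0 <= n -> vop v n vac = 0;
  vop_creation_const : forall v : V, vop v (-1) vac = v;
  vop_jacobi : borcherds vop vop
}.

Record va_module (F : fieldType) (V : lmodType F) (A : vertex_algebra V)
    (W : lmodType F) := VAModule {
  mop : V -> int -> W -> W;
  mop_linl : forall (c : F) (u u' : V) (n : int) (w : W),
      mop (c *: u + u') n w = c *: mop u n w + mop u' n w;
  mop_linr : forall (c : F) (u : V) (n : int) (w w' : W),
      mop u n (c *: w + w') = c *: mop u n w + mop u n w';
  mop_trunc : forall (u : V) (w : W), exists N : int,
      forall n : int, N <= n -> mop u n w = 0;
  mop_vac : forall (n : int) (w : W), mop (vac A) n w = if n == -1 then w else 0;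
  mop_jacobi : borcherds (vop A) mop
}.

(* The formal series  sum_{j >= 0} c_j x^{e0 + d*j}  (d <> 0), given by its
   coefficient of x^e, applied to w. *)
Definition arith_series (F : fieldType) (W : lmodType F) (d e0 : int)
    (c : nat -> W -> W) (e : int) (w : W) : W :=
  if [&& d != 0, (d %| (e - e0))%Z & 0 <= ((e - e0) %/ d)%Z]
  then c `|((e - e0) %/ d)%Z|%N w else 0.

From HB Require Import structures.
From mathcomp Require Import all_boot all_order all_algebra.
From mathcomp Require Import boolp functions.
From mathcomp Require Import zify.
Import Order.TTheory GRing.Theory Num.Theory.
Local Open Scope ring_scope.

(* The Borcherds identity with u = a, l = -n,
   m = 0 says that Y_W(a_{-n} v, x) = L (Y_W(v, x)), where L is the sum over
   i >= 0 of the operators "multiply on the left by C(n+i-1,i) a_{-n-i} x^i"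
   and "multiply on the right by (-1)^(n-1) C(n+i-1,i) a_i x^{-n-i}".  The
   commutation hypotheses make all these operators commute, so in
   characteristic p the binomial theorem gives L^p = sum of their p-th powers,
   and the p-th power of a summand is the same kind of product with a_{-n-i}^p
   x^{pi} (resp. a_i^p x^{-p(n+i)}), because C^p = C in the prime field.
   Applying L^p to Y_W(1,x) = id yields the formula.  Everything is done with
   L truncated to i < N, which is harmless on any fixed coefficient once N is
   large enough. *)

Lemma exists_common_bound s (P : nat -> nat -> Prop) :
  (forall i, (i < s)%N -> exists B, P i B) ->
  (forall i B B', (B <= B')%N -> P i B -> P i B') ->
  exists B, forall i, (i < s)%N -> P i B.
Proof.
elim: s => [|s IHs] exP monoP; first by exists 0%N.
have [B1 PB1] := IHs (fun i lt_is => exP i (ltnW lt_is)) monoP.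
have [B2 PB2] := exP s (ltnSn s).
exists (maxn B1 B2) => i; rewrite ltnS leq_eqVlt => /orP[/eqP -> | lt_is].
  by apply: monoP PB2; rewrite leq_maxr.
by apply: monoP (PB1 i lt_is); rewrite leq_maxl.
Qed.

Section CommutingLinearMaps.
Context {F : fieldType} {X : lmodType F}.

Section LinearMap.
Variables (f : X -> X) (f_lin : linear f).
Let fL : {linear X -> X} := HB.pack f (GRing.isLinear.Build F X X *:%R f f_lin).

Lemma lin_map0 : f 0 = 0. Proof. exact: (linear0 fL). Qed.
Lemma lin_mapZ c x : f (c *: x) = c *: f x. Proof. exact: (linearZZ fL). Qed.
Lemma lin_map_sum I (r : seq I) (G : I -> X) :
  f (\sum_(i <- r) G i) = \sum_(i <- r) f (G i).
Proof. exact: (linear_sum fL). Qed.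
End LinearMap.

Lemma linear_sum_fun I (r : seq I) (G : I -> X -> X) :
  (forall i, linear (G i)) -> linear (\sum_(i <- r) G i).
Proof.
move=> G_lin c x y; rewrite !fct_sumE scaler_sumr -big_split.
by apply: eq_bigr => i _; apply: G_lin.
Qed.

Lemma commute_iter (f g : X -> X) k :
  f \o g =1 g \o f -> forall x, f (iter k g x) = iter k g (f x).
Proof. by move=> fg; elim: k => [|k IHk] x //=; rewrite -IHk; apply: fg. Qed.

Lemma iter_add_binomial (f g : X -> X) : linear f -> linear g ->
  f \o g =1 g \o f -> forall k x,
  iter k (f \+ g) x = \sum_(j < k.+1) 'C(k, j)%:R *: iter j f (iter (k - j) g x).
Proof.
move=> f_lin g_lin fg; elim=> [|k IHk] x; first by rewrite big_ord1 scale1r.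
have gf j y : g (iter j f y) = iter j f (g y).
  by apply: commute_iter => z; exact: (esym (fg z)).
rewrite iterS IHk /= (lin_map_sum _ f_lin) (lin_map_sum _ g_lin).
under [X in X + _ = _]eq_bigr do rewrite (lin_mapZ _ f_lin) -iterS.
under [X in _ + X = _]eq_bigr => i _
  do rewrite (lin_mapZ _ g_lin) gf -iterS -(subSn (leq_ord i)).
rewrite [RHS]big_ord_recl bin0 subn0 scale1r.
under [in RHS]eq_bigr => i _ do rewrite lift0 binS natrD addrC scalerDl subSS.
rewrite big_split /= [RHS]addrCA; congr (_ + _).
rewrite big_ord_recl bin0 scale1r; congr (_ + _).
rewrite big_ord_recr /= bin_small // scale0r addr0.
by apply: eq_bigr => i _; rewrite /bump leq0n add0n add1n subSS.
Qed.

Lemma iter_pchar_add p (f g : X -> X) : p \in [pchar F] -> linear f -> linear g ->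
  f \o g =1 g \o f -> iter p (f \+ g) =1 iter p f \+ iter p g.
Proof.
move=> pchar_p f_lin g_lin fg x; rewrite iter_add_binomial //=.
case: p pchar_p => [|p] pchar_p; first by have := pcharf_prime pchar_p.
rewrite big_ord_recl big_ord_recr /= bin0 binn subnn !scale1r.
rewrite big1 ?add0r 1?addrC // => j _.
by rewrite (bin_lt_pcharf_0 pchar_p) ?scale0r // /bump leq0n add1n /= ltnS ltn_ord.
Qed.

Lemma iter_pchar_sum p I (r : seq I) (G : I -> X -> X) : p \in [pchar F] ->
  (forall i, linear (G i)) -> (forall i j, G i \o G j =1 G j \o G i) ->
  iter p (\sum_(i <- r) G i) =1 \sum_(i <- r) iter p (G i).
Proof.
move=> pchar_p G_lin G_comm; elim: r => [|i r IHr] x.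
  case: p pchar_p => [|p] pchar_p; first by have := pcharf_prime pchar_p.
  by rewrite !big_nil iterS.
rewrite !big_cons.
transitivity ((iter p (G i) \+ iter p (\sum_(j <- r) G j)) x); last by rewrite /= IHr.
apply: iter_pchar_add => //; first exact: linear_sum_fun.
move=> y /=; rewrite !fct_sumE (lin_map_sum _ (G_lin i)).
by apply: eq_bigr => j _; apply: G_comm.
Qed.

End CommutingLinearMaps.

Lemma binz_Nnat n i : (0 < n)%N -> binz (- n%:Z) i = (-1) ^+ i * 'C(n + i - 1, i)%:Z.
Proof. by case: n => // n _; rewrite -NegzE /= addSn subn1. Qed.

Section ArithmeticSeries.
Context {F : fieldType} {W : lmodType F}.

Lemma eq_arith_series (d e0 : int) (c c' : nat -> W -> W) :
  (forall j w, c j w = c' j w) -> arith_series d e0 c =2 arith_series d e0 c'.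
Proof. by move=> cc' e w; rewrite /arith_series; case: ifP. Qed.

Lemma arith_series_two_sided (d : nat) (g : int -> W -> W) e w : (0 < d)%N ->
  arith_series d%:Z 0 (fun j => g (- (1 + j)%:Z)) e w
  + arith_series (- d%:Z) (- d%:Z) (fun j => g j%:Z) e w
  = if (d%:Z %| e)%Z then g (- (e %/ d%:Z)%Z - 1) w else 0.
Proof.
move=> d_gt0; have d_neq0 : d%:Z != 0 by rewrite eqz_nat -lt0n.
have dvdzDd : (d%:Z %| e + d%:Z)%Z = (d%:Z %| e)%Z.
  by apply/dvdzP/dvdzP => -[k Ek]; [exists (k - 1) | exists (k + 1)]; nia.
rewrite /arith_series d_neq0 oppr_eq0 d_neq0 subr0 opprK.
rewrite [(- _ %| _)%Z]dvdzE abszN -dvdzE dvdzDd.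
case: (boolP (d%:Z %| e)%Z) => [/dvdzP[q ->] | _] /=; last by rewrite addr0.
rewrite mulzK // (_ : q * d%:Z + d%:Z = - (q + 1) * - d%:Z); last first.
  by rewrite mulrN mulNr opprK mulrDl mul1r.
rewrite mulzK ?oppr_eq0 //.
by do 2 case: ifP => ?; rewrite ?addr0 ?add0r; first [congr (g _ w); lia | exfalso; lia].
Qed.

Lemma arith_series_sum (d e0 : int) c e (w : W) N : d != 0 -> (`|e - e0| < N)%N ->
  arith_series d e0 c e w = \sum_(0 <= i < N) (if e == e0 + d * i%:Z then c i w else 0).
Proof.
move=> d0 eN; rewrite /arith_series d0 /=; case: ifP => [/andP[dvd ge] | nhit].
  have q_lt : (`|((e - e0) %/ d)%Z| < N)%N by nia.
  rewrite (bigD1_seq `|((e - e0) %/ d)%Z|%N) ?iota_uniq ?mem_index_iota ?q_lt //=.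
  rewrite ifT; last by apply/eqP; nia.
  by rewrite big1 ?addr0 // => i ne; rewrite ifF //; apply/eqP; nia.
rewrite big1 // => i _; case: eqP => // E.
move: nhit; have -> : ((e - e0) %/ d)%Z = i%:Z by nia.
by rewrite le0z_nat andbT => /negbT/negP[]; apply/dvdzP; exists i%:Z; lia.
Qed.

End ArithmeticSeries.

Section ModuleCoefficients.
Context {F : fieldType} {V : lmodType F} {A : vertex_algebra V} {W : lmodType F}.
Variable M : va_module A W.

(* A series [T] stands for the operator-valued formal series sum_e T e x^e;
   [mcoef v] is Y_W(v, x). *)
Local Notation series := (int -> W -> W).

Lemma mop_linear u m : linear (mop M u m).
Proof. by move=> c x y; rewrite mop_linr. Qed.

Lemma mop0 u m : mop M u m 0 = 0.
Proof. exact: lin_map0 (mop_linear u m). Qed.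

Lemma mopZ u m c x : mop M u m (c *: x) = c *: mop M u m x.
Proof. exact: lin_mapZ (mop_linear u m) c x. Qed.

Definition mcoef (v : V) : series := fun e w => mop M v (- e - 1) w.

Lemma mcoef_vac e w : mcoef (vac A) e w = if e == 0 then w else 0.
Proof. by rewrite /mcoef mop_vac; congr (if _ then _ else _); apply/eqP/eqP; lia. Qed.

Lemma mcoef0 v e : mcoef v e 0 = 0.
Proof. exact: mop0. Qed.

Variables (a : V) (n : nat).

Definition lcoef i : F := 'C(n + i - 1, i)%:R.
Definition rcoef i : F := (-1) ^+ n.-1 * lcoef i.

Hypothesis n_gt0 : (0 < n)%N.

(* The Borcherds identity for u = a, l = -n, m = 0, with its sums cut off at N. *)
Lemma mcoef_vop_neg (v : V) (e : int) (w : W) (N : nat) : (0 < N)%N ->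
  (forall i : nat, (N <= i)%N -> vop A a (- n%:Z + i%:Z) v = 0) ->
  (forall i : nat, (N <= i)%N -> mcoef v (e - i%:Z) w = 0) ->
  (forall i : nat, (N <= i)%N -> mop M a i%:Z w = 0) ->
  mcoef (vop A a (- n%:Z) v) e w =
  \sum_(0 <= i < N) lcoef i *: mop M a (- (n + i)%:Z) (mcoef v (e - i%:Z) w)
  + \sum_(0 <= i < N) rcoef i *: mcoef v (e + (n + i)%:Z) (mop M a i%:Z w).
Proof.
move=> N_gt0 av_trunc vw_trunc aw_trunc.
have vw_trunc' i : (N <= i)%N -> mop M v (- e - 1 + i%:Z) w = 0.
  by move=> iN; rewrite -(vw_trunc i iN) /mcoef; congr (mop M v _ w); lia.
have aw_trunc' i : (N <= i)%N -> mop M a (0 + i%:Z) w = 0.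
  by rewrite add0r; apply: aw_trunc.
have := @mop_jacobi _ _ _ _ M a v w (- n%:Z) 0 (- e - 1) N
  (fun i iN => And3 (av_trunc i iN) (vw_trunc' i iN) (aw_trunc' i iN)).
case: N N_gt0 {av_trunc vw_trunc aw_trunc vw_trunc' aw_trunc'} => [//|N] _.
rewrite big_ord_recl big1 => [|i _]; last by rewrite /binz /= bin0n scale0r.
rewrite addr0 add0r addr0 subr0 scale1r /mcoef => ->.
rewrite !big_mkord -big_split /=; apply: eq_bigr => i _.
rewrite binz_Nnat // intrM rmorphXn rmorphN1 mulrA -exprD addnn -mul2n exprM.
rewrite sqrrN !expr1n mul1r abszN absz_nat scalerBr scalerA /rcoef /lcoef pmulrn.
case: n n_gt0 => // n' _.
rewrite exprS mulN1r mulrN scaleNr opprK [_ * (-1) ^+ _]mulrC /=.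
by congr (_ *: mop M a _ (mop M v _ w) + _ *: mop M v _ (mop M a _ w)); lia.
Qed.

Definition lmul i (T : series) : series :=
  fun e w => lcoef i *: mop M a (- (n + i)%:Z) (T (e - i%:Z) w).
Definition rmul i (T : series) : series :=
  fun e w => rcoef i *: T (e + (n + i)%:Z) (mop M a i%:Z w).

Definition mul_term (x : nat + nat) : series -> series :=
  match x with inl i => lmul i | inr i => rmul i end.

Definition borcherds_op N : series -> series :=
  \sum_(x <- map inl (index_iota 0 N) ++ map inr (index_iota 0 N)) mul_term x.

Lemma borcherds_opE N T e w : borcherds_op N T e w =
  \sum_(0 <= i < N) lmul i T e w + \sum_(0 <= i < N) rmul i T e w.
Proof. by rewrite /borcherds_op !fct_sumE big_cat !big_map. Qed.

Lemma mul_term_linear x : linear (mul_term x).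
Proof.
case: x => i c T T'; apply/funext => e; apply/funext => w /=.
  by rewrite /lmul /= mop_linr scalerDr !scalerA mulrC.
by rewrite /rmul /= scalerDr !scalerA mulrC.
Qed.

Hypothesis a_pos_comm : forall (i j : nat) (w : W),
  mop M a i%:Z (mop M a j%:Z w) = mop M a j%:Z (mop M a i%:Z w).
Hypothesis a_neg_comm : forall (i j : nat), (0 < i)%N -> (0 < j)%N -> forall w : W,
  mop M a (- i%:Z) (mop M a (- j%:Z) w) = mop M a (- j%:Z) (mop M a (- i%:Z) w).

Lemma mul_term_commute x y : mul_term x \o mul_term y =1 mul_term y \o mul_term x.
Proof.
case: x => i; case: y => j T; apply/funext => e; apply/funext => w /=;
  rewrite /lmul /rmul /= ?mopZ !scalerA mulrC.
- rewrite a_neg_comm ?addn_gt0 ?n_gt0 //.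
  by congr (_ *: mop M a _ (mop M a _ (T _ w))); lia.
- by congr (_ *: mop M a _ (T _ _)); lia.
- by congr (_ *: mop M a _ (T _ _)); lia.
- by rewrite a_pos_comm; congr (_ *: T _ _); lia.
Qed.

Lemma iter_borcherds_op0 N k T :
  (forall e, T e 0 = 0) -> forall e, iter k (borcherds_op N) T e 0 = 0.
Proof.
move=> T0; elim: k => [|k IHk] e //; rewrite iterS borcherds_opE !big1 ?addr0 // => i _.
  by rewrite /rmul mop0 IHk scaler0.
by rewrite /lmul IHk mop0 scaler0.
Qed.

Definition vpow k := iter k (vop A a (- n%:Z)) (vac A).

(* The cut-off needed grows with the exponent e, since lmul i shifts exponents. *)
Definition vpow_approx k w (B : nat) := forall (e : int) (N : nat),
  (B <= N)%N -> e + B%:Z <= N%:Z ->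
  mcoef (vpow k) e w = iter k (borcherds_op N) (mcoef (vac A)) e w.

Lemma vpow_approx_mono k w B B' :
  (B <= B')%N -> vpow_approx k w B -> vpow_approx k w B'.
Proof. by move=> BB' approxB e N B'N eB'N; apply: approxB; lia. Qed.

Lemma exists_vpow_approx k w : exists B, vpow_approx k w B.
Proof.
elim: k w => [|k IHk] w; first by exists 0%N.
have [S aS] := mop_trunc M a w.
have aw_trunc (i : nat) : (`|S| <= i)%N -> mop M a i%:Z w = 0.
  by move=> iS; apply: aS; lia.
have [Ba approx_a] := @exists_common_bound `|S| (fun i => vpow_approx k (mop M a i%:Z w))
  (fun i _ => IHk _) (fun i => vpow_approx_mono k (mop M a i%:Z w)).
have [B0 approx0] := IHk w.
have [N1 vop_trunc1] := vop_trunc A a (vpow k).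
have [N2 mop_trunc2] := mop_trunc M (vpow k) w.
exists (B0 + Ba + `|S| + `|N1| + `|N2| + 2 * n + 2)%N => e N BN eBN.
rewrite /vpow iterS -/(vpow k) (@mcoef_vop_neg _ e w N); first last.
- by move=> i iN; apply: aw_trunc; lia.
- by move=> i iN; apply: mop_trunc2; lia.
- by move=> i iN; apply: vop_trunc1; lia.
- by lia.
rewrite iterS borcherds_opE; congr (_ + _); apply: eq_big_nat => i /andP[_ iN].
  by rewrite /lmul; congr (_ *: mop M a _ _); apply: approx0; lia.
rewrite /rmul; case: (ltnP i `|S|) => iS; last first.
  by rewrite aw_trunc // mcoef0 (iter_borcherds_op0 _ _ _ (mcoef0 (vac A))).
by congr (_ *: _); apply: approx_a => //; lia.
Qed.

Lemma iter_lmul k i T e w : iter k (lmul i) T e w =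
  lcoef i ^+ k *: iter k (mop M a (- (n + i)%:Z)) (T (e - (k * i)%:Z) w).
Proof.
elim: k e => [|k IHk] e; first by rewrite scale1r subr0.
rewrite iterS {1}/lmul IHk mopZ scalerA -exprS -iterS.
by congr (_ *: iter _ _ (T _ w)); lia.
Qed.

Lemma iter_rmul k i T e w : iter k (rmul i) T e w =
  rcoef i ^+ k *: T (e + (k * (n + i))%:Z) (iter k (mop M a i%:Z) w).
Proof.
elim: k e w => [|k IHk] e w; first by rewrite scale1r addr0.
rewrite iterS {1}/rmul IHk scalerA -exprS -iterSr.
by congr (_ *: T _ _); lia.
Qed.

Variable p : nat.
Hypothesis pchar_p : p \in [pchar F].

Lemma lcoef_pchar_exp i : lcoef i ^+ p = lcoef i.
Proof. by rewrite -(pFrobenius_autE pchar_p) pFrobenius_aut_nat. Qed.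

Lemma rcoef_pchar_exp i : rcoef i ^+ p = rcoef i.
Proof.
rewrite exprMn lcoef_pchar_exp exprAC -(pFrobenius_autE pchar_p).
by rewrite pFrobenius_autN pFrobenius_aut1.
Qed.

Lemma mcoef_vpow_pchar e w : exists N0 : nat, forall N : nat, (N0 <= N)%N ->
  mcoef (vpow p) e w =
  \sum_(0 <= i < N) (if e == 0 + p%:Z * i%:Z
                     then lcoef i *: iter p (mop M a (- (n + i)%:Z)) w else 0)
  + \sum_(0 <= i < N) (if e == - (p * n)%:Z + - p%:Z * i%:Z
                       then rcoef i *: iter p (mop M a i%:Z) w else 0).
Proof.
have [B approxB] := exists_vpow_approx p w.
exists (B + `|e|)%N => N BN; rewrite (approxB e N); [|lia|lia].
rewrite (iter_pchar_sum _ _ _ _ pchar_p mul_term_linear mul_term_commute) !fct_sumE.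
rewrite big_cat !big_map; congr (_ + _); apply: eq_bigr => i _ /=.
  rewrite iter_lmul lcoef_pchar_exp mcoef_vac.
  have -> : (e - (p * i)%:Z == 0) = (e == 0 + p%:Z * i%:Z) by apply/eqP/eqP; lia.
  by case: ifP => // _; rewrite iter_fix ?mop0 ?scaler0.
rewrite iter_rmul rcoef_pchar_exp mcoef_vac.
have -> : (e + (p * (n + i))%:Z == 0) = (e == - (p * n)%:Z + - p%:Z * i%:Z).
  by apply/eqP/eqP; lia.
by case: ifP => _; rewrite ?scaler0.
Qed.

Lemma mcoef_vpow_pchar_arith e w :
  mcoef (vpow p) e w =
  arith_series p%:Z 0 (fun j w' => lcoef j *: iter p (mop M a (- (n + j)%:Z)) w') e w
  + arith_series (- p%:Z) (- (p * n)%:Z)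
      (fun j w' => rcoef j *: iter p (mop M a j%:Z) w') e w.
Proof.
have p_gt0 : (0 < p)%N by rewrite prime_gt0 // (pcharf_prime pchar_p).
have [N0 coefE] := mcoef_vpow_pchar e w.
pose N := (N0 + `|e| + `|p * n| + 1)%N.
rewrite (coefE N) ?(arith_series_sum _ _ _ _ _ N) //; rewrite /N; lia.
Qed.

End ModuleCoefficients.

Theorem lemma5 (F : fieldType) (p : nat) (hp : p \in [pchar F])
    (V : lmodType F) (A : vertex_algebra V) (W : lmodType F)
    (M : va_module A W) (a : V)
    (hcomm_pos : forall (i j : nat) (w : W),
        mop M a i%:Z (mop M a j%:Z w) = mop M a j%:Z (mop M a i%:Z w))
    (hcomm_neg : forall (i j : nat), (0 < i)%N -> (0 < j)%N -> forall w : W,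
        mop M a (- i%:Z) (mop M a (- j%:Z) w)
        = mop M a (- j%:Z) (mop M a (- i%:Z) w)) :
  (forall n : nat, (0 < n)%N -> forall (e : int) (w : W),
     mop M (iter p (vop A a (- n%:Z)) (vac A)) (- e - 1) w
     = arith_series p%:Z 0
         (fun j w' => ('C(n + j - 1, j))%:R *: iter p (mop M a (- (n + j)%:Z)) w') e w
       + arith_series (- p%:Z) (- (p * n)%:Z)
         (fun j w' => ((-1) ^+ n.-1 * ('C(n + j - 1, j))%:R)
                        *: iter p (mop M a j%:Z) w') e w)
  /\
  (forall (e : int) (w : W),
     mop M (iter p (vop A a (-1)) (vac A)) (- e - 1) w
     = if (p%:Z %| e)%Z then iter p (mop M a (- (e %/ p%:Z)%Z - 1)) w else 0).
Proof.
have coefE n n_gt0 := mcoef_vpow_pchar_arith M a n n_gt0 hcomm_pos hcomm_neg p hp.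
split=> [n n_gt0 e w | e w]; first exact: coefE.
have p_gt0 : (0 < p)%N by rewrite prime_gt0 // (pcharf_prime hp).
have := coefE 1%N isT e w; rewrite /mcoef /vpow => ->.
rewrite -(arith_series_two_sided p (fun m => iter p (mop M a m)) e w p_gt0) muln1.
congr (_ + _); apply: eq_arith_series => j w' /=.
  by rewrite /lcoef add1n subn1 binn scale1r.
by rewrite /rcoef /lcoef add1n subn1 binn mul1r scale1r.
Qed.
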